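(* Suppose $G$ consists of a single strongly connected component and at least one vertex of $G$ has out-degree greater than one. Then the flow $\psi$ on $\Delta$ is chaotic.
   Context: $G$ is a finite directed graph (loops allowed) with vertex set $V$. $\Omega$ is the set of bi-infinite paths in $G$, i.e. sequences $(x_i)_{i\in\mathbb Z}\in V^{\mathbb Z}$ such that for every $i$ there is an edge from $x_i$ to $x_{i+1}$. Fix $h>0$. $\bar\Delta$ is the set of functions $x:\mathbb R\to V$ that are constant on each interval $[nh,(n+1)h)$, $n\in\mathbb Z$, and satisfy $(x(ih))_{i\in\mathbb Z}\in\Omega$. $\Delta=\{x(\cdot+t): x\in\bar\Delta,\ t\in\mathbb R\}$, with metric $d(x,y)=\sum_{i\in\mathbb Z}4^{-|i|}\frac1h\int_{ih}^{(i+1)h}\delta(x,y,t)\,dt$, where $\delta(x,y,t)=1$ if $x(t)\ne y(t)$ and $0$ otherwise. The flow $\psi:\mathbb R\times\Delta\to\Delta$ is $\psi(t,x)=x(\cdot+t)$. ''$G$ consists of a single strongly connected component'' means that for all $u,v\in V$ (including $u=v$) there is a directed path of positive length from $u$ to $v$. A flow on a metric space $X$ is chaotic if (i) it has sensitive dependence on initial conditions (there is $\delta>0$ such that for every $x\in X$ and every neighborhood $B$ of $x$ there are $y\in B$, $t>0$ with $d(\Phi_t(x),\Phi_t(y))>\delta$), (ii) its periodic points are dense in $X$, and (iii) it is topologically transitive (there is $x\in X$ with $\omega(x)=X$, where $\omega(x)$ is the set of limits of $\Phi_{t_k}(x)$ along sequences $t_k\to+\infty$). *)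

From Stdlib Require Import Reals Lra ZArith List Classical ClassicalEpsilon.
From Stdlib Require Import Relations.
Open Scope R_scope.

(* Riemann integral of f on [a,b] (0 if f is not Riemann integrable there;
   the value does not depend on the integrability proof, RiemannInt_P5). *)
Definition RInt (f : R -> R) (a b : R) : R :=
  match excluded_middle_informative
          (exists _ : Riemann_integrable f a b, True) with
  | left H => RiemannInt (proj1_sig (constructive_indefinite_description _ H))
  | right _ => 0
  end.

(* The finite directed graph G: vertex type V (finite), edge relation
   (a simple digraph, loops allowed). *)
Definition finite_type (V : Type) : Prop := exists l : list V, forall v, In v l.

(* single strongly connected component: a path of positive length
   between any two (possibly equal) vertices *)
Definition strongly_connected {V : Type} (edge : V -> V -> Prop) : Prop :=
  forall u v : V, clos_trans V edge u v.

Definition has_branching {V : Type} (edge : V -> V -> Prop) : Prop :=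
  exists u v1 v2 : V, v1 <> v2 /\ edge u v1 /\ edge u v2.

Definition Omega {V : Type} (edge : V -> V -> Prop) (w : Z -> V) : Prop :=
  forall i : Z, edge (w i) (w (i + 1)%Z).

Definition DeltaBar {V : Type} (edge : V -> V -> Prop) (h : R) (x : R -> V) : Prop :=
  (forall (n : Z) (t : R), IZR n * h <= t < (IZR n + 1) * h -> x t = x (IZR n * h))
  /\ Omega edge (fun i => x (IZR i * h)).

Definition Delta {V : Type} (edge : V -> V -> Prop) (h : R) (y : R -> V) : Prop :=
  exists x t, DeltaBar edge h x /\ y = (fun s => x (s + t)).

Definition psi {V : Type} (t : R) (x : R -> V) : R -> V := fun s => x (s + t).

Definition delta_ind {V : Type} (x y : R -> V) (t : R) : R :=
  if excluded_middle_informative (x t <> y t) then 1 else 0.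

Definition dterm {V : Type} (h : R) (x y : R -> V) (i : Z) : R :=
  (/ 4) ^ Z.abs_nat i * (/ h * RInt (delta_ind x y) (IZR i * h) ((IZR i + 1) * h)).

(* the series over Z, grouped as  term 0,  term n + term (-n)  (n >= 1) *)
Definition dseq {V : Type} (h : R) (x y : R -> V) (n : nat) : R :=
  match n with
  | O => dterm h x y 0
  | S _ => dterm h x y (Z.of_nat n) + dterm h x y (- Z.of_nat n)
  end.

(* the metric d (the series converges; value 0 as a default otherwise) *)
Definition dist {V : Type} (h : R) (x y : R -> V) : R :=
  match excluded_middle_informative (exists l, infinite_sum (dseq h x y) l) with
  | left H => proj1_sig (constructive_indefinite_description _ H)
  | right _ => 0
  end.

Section Chaos.
Context {V : Type} (edge : V -> V -> Prop) (h : R).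
Let X := Delta edge h.
Let d := dist (V := V) h.

Definition is_neighborhood (x : R -> V) (B : (R -> V) -> Prop) : Prop :=
  exists eps, 0 < eps /\ forall y, X y -> d x y < eps -> B y.

Definition sensitive : Prop :=
  exists del, 0 < del /\
    forall x, X x -> forall B, is_neighborhood x B ->
      exists y t, X y /\ B y /\ 0 < t /\ d (psi t x) (psi t y) > del.

Definition periodic_point (x : R -> V) : Prop :=
  exists T, 0 < T /\ psi T x = x.

Definition periodic_dense : Prop :=
  forall x, X x -> forall eps, 0 < eps ->
    exists p, X p /\ periodic_point p /\ d x p < eps.

Definition omega_limit (x y : R -> V) : Prop :=
  X y /\ exists tk : nat -> R,
    (forall M, exists N, forall k, (N <= k)%nat -> tk k > M) /\
    Un_cv (fun k => d (psi (tk k) x) y) 0.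

Definition top_transitive : Prop :=
  exists x, X x /\ forall y, omega_limit x y <-> X y.

Definition chaotic : Prop := sensitive /\ periodic_dense /\ top_transitive.
End Chaos.

From Pilot Require Import Defs.
From Stdlib Require Import Reals Lra Lia ZArith List Relations.
From Stdlib Require Import ClassicalEpsilon FunctionalExtensionality.
Open Scope R_scope.

(* Every point of Delta is a bi-infinite path w of G played at one vertex per time h and
   shifted by some t.  Two such signals whose paths agree within N steps of the current
   position are 4 (1/2)^N close, while signals that differ on the whole first cell are at
   distance at least 1.  Hence:
   - periodic points are dense: close a long window of w into a cycle using strong
     connectivity;
   - sensitivity: far in the future, walk from w to a vertex with two successors and leave
     through the one not taken by w, then flow until the two paths disagree;
   - transitivity: concatenate, through connecting walks, all finite walks of G (finitely
     many of each length since V is finite); the resulting path visits every window of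
     every path, so its signal approaches every point of Delta along a sequence of times. *)

Lemma Riemann_integrable_const_open (f : R -> R) a b c :
  a <= b -> (forall t, a < t < b -> f t = c) -> Riemann_integrable f a b.
Proof.
  intros Hab Hf eps.
  assert (Hstep : IsStepFun f a b).
  { exists (a :: b :: nil), (c :: nil); repeat split.
    - intros i Hi; simpl in Hi; inversion Hi; [simpl; assumption | lia].
    - simpl; unfold Rmin; destruct (Rle_dec a b); lra.
    - simpl; unfold Rmax; destruct (Rle_dec a b); lra.
    - unfold constant_D_eq, open_interval; intros i Hi; simpl in Hi.
      assert (i = 0%nat) by lia; subst; simpl; intros; apply Hf; lra. }
  exists (mkStepFun Hstep), (mkStepFun (StepFun_P4 a b 0)); split.
  - intros; simpl; unfold fct_cte; rewrite Rminus_diag, Rabs_R0; lra.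
  - rewrite StepFun_P18, Rmult_0_l, Rabs_R0; apply (cond_pos eps).
Qed.

Lemma RInt_const_open (f : R -> R) a b c :
  a <= b -> (forall t, a < t < b -> f t = c) -> RInt f a b = c * (b - a).
Proof.
  intros Hab Hf. unfold RInt.
  destruct excluded_middle_informative as [H|H].
  - destruct (constructive_indefinite_description _ H) as [pr Hpr]; simpl; clear Hpr.
    rewrite (RiemannInt_P18 pr (RiemannInt_P14 a b c) Hab).
    + apply RiemannInt_P15.
    + intros; unfold fct_cte; apply Hf; auto.
  - exfalso; apply H; exists (Riemann_integrable_const_open f a b c Hab Hf); auto.
Qed.

Lemma RInt_unit_bounds (f : R -> R) a b :
  a <= b -> (forall t, 0 <= f t <= 1) -> 0 <= RInt f a b <= b - a.
Proof.
  intros Hab Hf. unfold RInt.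
  destruct excluded_middle_informative as [H|H]; [|lra].
  destruct (constructive_indefinite_description _ H) as [pr Hpr]; simpl; clear Hpr. split.
  - rewrite <- (Rmult_0_l (b - a)), <- (RiemannInt_P15 (RiemannInt_P14 a b 0)).
    apply RiemannInt_P19; auto. intros; unfold fct_cte; apply Hf.
  - rewrite <- (Rmult_1_l (b - a)), <- (RiemannInt_P15 (RiemannInt_P14 a b 1)).
    apply RiemannInt_P19; auto. intros; unfold fct_cte; apply Hf.
Qed.

Lemma pow_half_bounds k : 0 <= (/2)^k <= 1.
Proof. induction k; simpl; [lra|]. split; nra. Qed.

Lemma pow_half_le m n : (m <= n)%nat -> (/2)^n <= (/2)^m.
Proof.
  intro Hmn. replace n with (m + (n - m))%nat by lia. rewrite pow_add.
  pose proof (pow_half_bounds m); pose proof (pow_half_bounds (n - m)); nra.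
Qed.

Lemma sum_le_geometric_half (a : nat -> R) c :
  (forall n, 0 <= a n <= c * (/2)^n) -> forall n, sum_f_R0 a n <= 2 * c.
Proof.
  intros Ha n.
  assert (Hc : 0 <= c) by (specialize (Ha 0%nat); simpl in Ha; lra).
  apply Rle_trans with (c * sum_f_R0 (fun i => (/2)^i) n).
  - rewrite scal_sum. apply sum_Rle; intros i _. rewrite Rmult_comm. apply Ha.
  - rewrite tech3 by lra. pose proof (pow_half_bounds (S n)).
    replace ((1 - (/2) ^ S n) / (1 - /2)) with (2 * (1 - (/2) ^ S n)) by field. nra.
Qed.

Lemma small_pow_half eps : 0 < eps -> exists N, 4 * (/2)^N < eps.
Proof.
  intro Heps.
  destruct (pow_lt_1_zero (/2) ltac:(rewrite Rabs_right; lra) (eps/4) ltac:(lra)) as [N HN].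
  exists N. specialize (HN N (le_n N)).
  rewrite Rabs_right in HN by (apply Rle_ge, pow_le; lra). lra.
Qed.

Section Metric.
Context {V : Type} (h : R) (Hh : 0 < h).

Lemma delta_ind_bounds (x y : R -> V) t : 0 <= delta_ind x y t <= 1.
Proof. unfold delta_ind; destruct excluded_middle_informative; lra. Qed.

Lemma dterm_bounds (x y : R -> V) i : 0 <= dterm h x y i <= (/4) ^ Z.abs_nat i.
Proof.
  unfold dterm.
  pose proof (RInt_unit_bounds (delta_ind x y) (IZR i * h) ((IZR i + 1) * h)
    ltac:(nra) (delta_ind_bounds x y)) as HI.
  replace ((IZR i + 1) * h - IZR i * h) with h in HI by ring.
  assert (0 <= / h * RInt (delta_ind x y) (IZR i * h) ((IZR i + 1) * h) <= 1).
  { split.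
    - apply Rmult_le_pos; [apply Rlt_le, Rinv_0_lt_compat|]; lra.
    - apply Rmult_le_reg_l with h; [lra|]. rewrite <- Rmult_assoc, Rinv_r; lra. }
  assert (0 <= (/4) ^ Z.abs_nat i) by (apply pow_le; lra).
  split; nra.
Qed.

Lemma dseq_bounds (x y : R -> V) n : 0 <= dseq h x y n <= 2 * (/4)^n.
Proof.
  destruct n as [|n]; simpl.
  - pose proof (dterm_bounds x y 0); simpl in *; lra.
  - pose proof (dterm_bounds x y (Z.of_nat (S n))) as Hp.
    pose proof (dterm_bounds x y (- Z.of_nat (S n))) as Hm.
    change (Z.abs_nat (- Z.of_nat (S n))) with (Z.abs_nat (Z.of_nat (S n))) in Hm.
    rewrite Zabs2Nat.id in Hp, Hm. simpl in *. lra.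
Qed.

Lemma dseq_le_after (x y : R -> V) N n :
  (forall k, (k <= N)%nat -> dseq h x y k = 0) -> dseq h x y n <= 2 * (/2)^N * (/2)^n.
Proof.
  intro HN. pose proof (pow_half_bounds N); pose proof (pow_half_bounds n).
  destruct (le_lt_dec n N) as [Hn|Hn].
  - rewrite HN by auto. nra.
  - pose proof (dseq_bounds x y n) as Hb.
    replace (/4) with (/2 * /2) in Hb by field. rewrite Rpow_mult_distr in Hb.
    pose proof (pow_half_le N n ltac:(lia)). nra.
Qed.

Lemma dist_infinite_sum (x y : R -> V) : infinite_sum (dseq h x y) (Defs.dist h x y).
Proof.
  unfold Defs.dist. destruct excluded_middle_informative as [H|H].
  - exact (proj2_sig (constructive_indefinite_description _ H)).
  - exfalso; apply H.
    destruct (growing_cv (sum_f_R0 (dseq h x y))) as [l Hl]; [| |exists l; exact Hl].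
    + intro n; cbn [sum_f_R0]. pose proof (dseq_bounds x y (S n)); lra.
    + exists 4. intros r [n ->].
      apply (sum_le_geometric_half (dseq h x y) 2). intro k.
      pose proof (dseq_bounds x y k) as Hk. pose proof (pow_half_bounds k).
      replace (/4) with (/2 * /2) in Hk by field. rewrite Rpow_mult_distr in Hk. nra.
Qed.

Lemma dseq0_le_dist (x y : R -> V) : dseq h x y 0 <= Defs.dist h x y.
Proof.
  apply (sum_incr (dseq h x y) 0); [apply dist_infinite_sum|].
  intro n; apply dseq_bounds.
Qed.

Lemma dist_nonneg (x y : R -> V) : 0 <= Defs.dist h x y.
Proof. pose proof (dseq0_le_dist x y); pose proof (dseq_bounds x y 0); lra. Qed.

Lemma dist_le_of_dseq_vanish (x y : R -> V) N :
  (forall n, (n <= N)%nat -> dseq h x y n = 0) -> Defs.dist h x y <= 4 * (/2)^N.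
Proof.
  intro HN.
  apply Rle_cv_lim with (sum_f_R0 (dseq h x y)) (fun _ => 4 * (/2)^N);
    [| apply dist_infinite_sum |].
  - intro n. replace (4 * (/2)^N) with (2 * (2 * (/2)^N)) by ring.
    apply sum_le_geometric_half. intro k. split.
    + apply dseq_bounds.
    + apply dseq_le_after; auto.
  - intros eps Heps; exists 0%nat; intros; unfold Rdist; rewrite Rminus_diag, Rabs_R0; lra.
Qed.

End Metric.

Section Signals.
Context {V : Type} (edge : V -> V -> Prop) (h : R) (Hh : 0 < h).

Lemma Zfloor_div_eq n s : IZR n * h <= s < (IZR n + 1) * h -> Zfloor (s / h) = n.
Proof.
  intros [H1 H2]. apply Zfloor_eq. split.
  - apply Rmult_le_reg_r with h; auto. replace (s / h * h) with s by (field; lra). lra.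
  - apply Rmult_lt_reg_r with h; auto. replace (s / h * h) with s by (field; lra). lra.
Qed.

Lemma Zfloor_div_bound s :
  IZR (Zfloor (s / h)) * h <= s < (IZR (Zfloor (s / h)) + 1) * h.
Proof.
  pose proof (Zfloor_bound (s / h)) as [H1 H2].
  assert (Hs : s / h * h = s) by (field; lra). split; nra.
Qed.

Definition signal (w : Z -> V) (t : R) : R -> V := fun s => w (Zfloor ((s + t) / h)).

Lemma signal_Delta w t : Omega edge w -> Defs.Delta edge h (signal w t).
Proof.
  intro Hw. exists (signal w 0), t. split.
  - split.
    + intros n s Hs. unfold signal. rewrite !Rplus_0_r.
      rewrite (Zfloor_div_eq n s Hs), (Zfloor_div_eq n (IZR n * h)); auto. nra.
    + intro i. unfold signal. rewrite !Rplus_0_r.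
      rewrite (Zfloor_div_eq i), (Zfloor_div_eq (i + 1)); [apply Hw| |];
        rewrite ?plus_IZR; nra.
  - apply functional_extensionality; intro s. unfold signal. now rewrite Rplus_0_r.
Qed.

Lemma Delta_signal y : Defs.Delta edge h y -> exists w t, Omega edge w /\ y = signal w t.
Proof.
  intros [x [t [[Hstep Hx] ->]]].
  exists (fun i => x (IZR i * h)), t. split; auto.
  apply functional_extensionality; intro s. unfold signal.
  apply Hstep, Zfloor_div_bound.
Qed.

Lemma psi_signal w t T : psi T (signal w t) = signal w (t + T).
Proof.
  apply functional_extensionality; intro s. unfold psi, signal. do 3 f_equal. ring.
Qed.

Lemma signal_shift w t D :
  signal w (t + IZR D * h) = signal (fun j => w (j + D)%Z) t.
Proof.
  apply functional_extensionality; intro s. unfold signal.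
  replace ((s + (t + IZR D * h)) / h) with ((s + t) / h + IZR D) by (field; lra).
  now rewrite Zfloor_addz.
Qed.

Lemma dist_signal_le_of_agree w1 w2 t N :
  (forall j, (Z.abs (j - Zfloor (t / h)) <= Z.of_nat N + 1)%Z -> w1 j = w2 j) ->
  Defs.dist h (signal w1 t) (signal w2 t) <= 4 * (/2)^N.
Proof.
  intro Hw. apply dist_le_of_dseq_vanish; auto.
  assert (Hi : forall i, (Z.abs i <= Z.of_nat N)%Z -> dterm h (signal w1 t) (signal w2 t) i = 0).
  { intros i Hi. unfold dterm.
    rewrite (RInt_const_open _ _ _ 0); [ring|nra|].
    intros s Hs. unfold delta_ind. destruct excluded_middle_informative as [Hne|]; auto.
    exfalso; apply Hne. unfold signal. apply Hw.
    pose proof (Zfloor_bound (t / h)) as Ht.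
    assert (Hst : IZR i + IZR (Zfloor (t / h)) < (s + t) / h < IZR i + IZR (Zfloor (t / h)) + 2).
    { replace ((s + t) / h) with (s / h + t / h) by (field; lra).
      assert (IZR i < s / h < IZR i + 1).
      { split; [apply Rmult_lt_reg_r with h | apply Rmult_lt_reg_r with h]; auto;
          replace (s / h * h) with s by (field; lra); lra. }
      lra. }
    pose proof (Zfloor_bound ((s + t) / h)).
    assert (i + Zfloor (t / h) - 1 < Zfloor ((s + t) / h) < i + Zfloor (t / h) + 2)%Z
      by (split; apply lt_IZR; rewrite ?minus_IZR, ?plus_IZR; lra).
    lia. }
  intros n Hn. destruct n as [|n]; simpl.
  - apply Hi. simpl. lia.
  - rewrite !Hi; [ring|lia|lia].
Qed.

Lemma dist_signal_ge1 w1 w2 : w1 0%Z <> w2 0%Z -> 1 <= Defs.dist h (signal w1 0) (signal w2 0).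
Proof.
  intro Hne. eapply Rle_trans; [|apply dseq0_le_dist; auto]. simpl. unfold dterm.
  rewrite (RInt_const_open _ _ _ 1).
  - simpl. replace ((0 + 1) * h - 0 * h) with h by ring. field_simplify; lra.
  - lra.
  - intros s Hs. unfold delta_ind. destruct excluded_middle_informative as [|Heq]; auto.
    exfalso; apply Heq. unfold signal. rewrite (Zfloor_div_eq 0); auto. lra.
Qed.

End Signals.

Section Walks.
Context {V : Type} (edge : V -> V -> Prop) (d : V).
Local Open Scope nat_scope.

(* Finite walks are lists; [d] is only a default for [nth] and never observed. *)
Definition walk (l : list V) : Prop :=
  forall i, S i < length l -> edge (nth i l d) (nth (S i) l d).

Lemma walk_app l1 a l2 : walk (l1 ++ a :: nil) -> walk (a :: l2) -> walk (l1 ++ a :: l2).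
Proof.
  intros H1 H2 i Hi. rewrite length_app in Hi; simpl in Hi.
  assert (Hglue : forall j, j <= length l1 -> nth j (l1 ++ a :: l2) d = nth j (l1 ++ a :: nil) d).
  { intros j Hj. destruct (Nat.eq_dec j (length l1)) as [->|Hne].
    - rewrite !app_nth2, Nat.sub_diag by lia. reflexivity.
    - rewrite !app_nth1 by lia. reflexivity. }
  destruct (le_lt_dec (S i) (length l1)) as [Hs|Hs].
  - rewrite !Hglue by lia. apply H1. rewrite length_app; simpl; lia.
  - rewrite !app_nth2 by lia. replace (S i - length l1) with (S (i - length l1)) by lia.
    apply H2. simpl; lia.
Qed.

Lemma walk_app_l l1 l2 : walk (l1 ++ l2) -> walk l1.
Proof.
  intros H i Hi. rewrite <- !(app_nth1 l1 l2) by lia. apply H. rewrite length_app; lia.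
Qed.

Lemma walk_last_edge l x i : walk (l ++ x :: nil) -> S i = length l -> edge (nth i l d) x.
Proof.
  intros H Hi. specialize (H i). rewrite length_app in H. cbn [length] in H.
  rewrite app_nth1, app_nth2 in H by lia. rewrite Hi, Nat.sub_diag in H. apply H. lia.
Qed.

Lemma walk_of_clos_trans u v : clos_trans V edge u v -> exists c, walk (u :: c ++ v :: nil).
Proof.
  induction 1 as [x y Hxy | x y z _ [c1 H1] _ [c2 H2]].
  - exists nil. intros i Hi. simpl in Hi. assert (i = 0) by lia. subst. exact Hxy.
  - exists (c1 ++ y :: c2).
    replace (x :: (c1 ++ y :: c2) ++ z :: nil) with ((x :: c1) ++ y :: (c2 ++ z :: nil))
      by (simpl; rewrite <- app_assoc; reflexivity).
    apply walk_app; auto.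
Qed.

Lemma clos_trans_out_edge u v : clos_trans V edge u v -> exists z, edge u z.
Proof. induction 1; eauto. Qed.

Lemma clos_trans_in_edge u v : clos_trans V edge u v -> exists z, edge z v.
Proof. induction 1; eauto. Qed.

Definition prepend (l : list V) (s : nat -> V) (n : nat) : V :=
  if n <? length l then nth n l d else s (n - length l).

Lemma prepend_edge l s : l <> nil -> walk l -> edge (last l d) (s 0) ->
  (forall n, edge (s n) (s (S n))) -> forall n, edge (prepend l s n) (prepend l s (S n)).
Proof.
  intros Hl Hwl Hlast Hs n. unfold prepend.
  destruct (Nat.ltb_spec n (length l)); destruct (Nat.ltb_spec (S n) (length l)).
  - apply Hwl; auto.
  - destruct (exists_last Hl) as [r [z ->]]. rewrite last_last in Hlast.
    rewrite length_app in *; cbn [length] in *.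
    rewrite app_nth2 by lia. replace (n - length r) with 0 by lia.
    replace (S n - (length r + 1)) with 0 by lia. exact Hlast.
  - lia.
  - replace (S n - length l) with (S (n - length l)) by lia. apply Hs.
Qed.

Definition splice (w : Z -> V) (M : Z) (f : nat -> V) (j : Z) : V :=
  if Z.leb j M then w j else f (Z.to_nat (j - M)).

Lemma splice_Omega w M f : Omega edge w -> f 0 = w M ->
  (forall n, edge (f n) (f (S n))) -> Omega edge (splice w M f).
Proof.
  intros Hw Hf0 Hf j. unfold splice.
  destruct (Z.leb_spec j M); destruct (Z.leb_spec (j + 1) M).
  - apply Hw.
  - assert (j = M) by lia. subst j. rewrite <- Hf0.
    replace (Z.to_nat (M + 1 - M)) with 1 by lia. apply Hf.
  - lia.
  - replace (Z.to_nat (j + 1 - M)) with (S (Z.to_nat (j - M))) by lia. apply Hf.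
Qed.

Definition window (w : Z -> V) (a : Z) (K : nat) : list V :=
  map (fun k => w (a + Z.of_nat k)%Z) (seq 0 K).

Lemma window_length w a K : length (window w a K) = K.
Proof. unfold window. now rewrite length_map, length_seq. Qed.

Lemma window_nth w a K i : i < K -> nth i (window w a K) d = w (a + Z.of_nat i)%Z.
Proof.
  intro Hi. unfold window.
  rewrite (nth_indep _ _ ((fun k => w (a + Z.of_nat k)%Z) 0))
    by (rewrite length_map, length_seq; auto).
  now rewrite (map_nth (fun k => w (a + Z.of_nat k)%Z)), seq_nth.
Qed.

Lemma window_walk w a K : Omega edge w -> walk (window w a K).
Proof.
  intros Hw i Hi. rewrite window_length in Hi. rewrite !window_nth by lia.
  replace (a + Z.of_nat (S i))%Z with (a + Z.of_nat i + 1)%Z by lia. apply Hw.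
Qed.

Lemma window_S w a K : window w a (S K) = window w a K ++ w (a + Z.of_nat K)%Z :: nil.
Proof. unfold window. now rewrite seq_S, map_app. Qed.

End Walks.

Section Strongly_connected.
Context {V : Type} (edge : V -> V -> Prop) (Hsc : strongly_connected edge).

(* Close the window [w a, ..., w (a+K)] into a cycle by a walk back to [w a]. *)
Lemma periodic_path_through (w : Z -> V) a K : Omega edge w ->
  exists p L, (0 < L)%Z /\ Omega edge p /\ (forall j, p (j + L)%Z = p j) /\
    (forall j, (a <= j <= a + Z.of_nat K)%Z -> p j = w j).
Proof.
  intro Hw. set (d := w a).
  destruct (walk_of_clos_trans edge d _ _ (Hsc (w (a + Z.of_nat K)%Z) (w a))) as [c Hc].
  set (C := window w a (S K) ++ c).
  assert (HC : walk edge d (C ++ w a :: nil)).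
  { unfold C. rewrite window_S, <- !app_assoc. simpl. apply walk_app; auto.
    rewrite <- window_S. apply window_walk; auto. }
  assert (HlenC : length C = (S K + length c)%nat)
    by (unfold C; rewrite length_app, window_length; auto).
  set (L := Z.of_nat (length C)).
  assert (HL : (0 < L)%Z) by (unfold L; lia).
  assert (HC0 : nth 0 C d = w a).
  { unfold C. rewrite app_nth1, window_nth by (rewrite ?window_length; lia).
    f_equal; lia. }
  exists (fun j => nth (Z.to_nat ((j - a) mod L)) C d), L. split; [auto|]. split; [|split].
  - intro j. pose proof (Z.mod_pos_bound (j - a) L HL) as Hk.
    pose proof (Z_div_mod_eq_full (j - a) L) as Hdm.
    set (k := ((j - a) mod L)%Z) in *. set (q := ((j - a) / L)%Z) in *.
    destruct (Z.eq_dec (k + 1) L) as [Heq|Hne].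
    + replace ((j + 1 - a) mod L)%Z with 0%Z by (apply Z.mod_unique with (q + 1)%Z; lia).
      change (Z.to_nat 0) with 0%nat. rewrite HC0. apply walk_last_edge; auto. unfold L in *; lia.
    + replace ((j + 1 - a) mod L)%Z with (k + 1)%Z by (apply Z.mod_unique with q; lia).
      replace (Z.to_nat (k + 1)) with (S (Z.to_nat k)) by lia.
      apply (walk_app_l edge d C (w a :: nil) HC). unfold L in *; lia.
  - intro j. do 2 f_equal. replace (j + L - a)%Z with ((j - a) + 1 * L)%Z by lia.
    apply Z_mod_plus_full.
  - intros j Hj. rewrite Z.mod_small by (unfold L; lia).
    unfold C. rewrite app_nth1, window_nth by (rewrite ?window_length; lia).
    f_equal; lia.
Qed.

(* Follow [w] up to [M], walk to the branching vertex [u], then take the edge out of [u]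
   that disagrees with [w] at the arrival time [k]. *)
Lemma deviating_path (w : Z -> V) M u v1 v2 : Omega edge w ->
  v1 <> v2 -> edge u v1 -> edge u v2 ->
  exists w' k, Omega edge w' /\ (forall j, (j <= M)%Z -> w' j = w j) /\
    (M < k)%Z /\ w' k <> w k.
Proof.
  intros Hw Hv Hu1 Hu2. set (d := u).
  assert (Hout : forall z, exists z', edge z z')
    by (intro z; apply (clos_trans_out_edge edge z z), Hsc).
  destruct (choice _ Hout) as [next Hnext].
  destruct (walk_of_clos_trans edge d _ _ (Hsc (w M) u)) as [c Hc].
  set (F := w M :: c ++ u :: nil).
  set (k := (M + Z.of_nat (length F))%Z).
  set (v := if excluded_middle_informative (w k = v1) then v2 else v1).
  assert (Hvk : v <> w k) by (unfold v; destruct excluded_middle_informative; congruence).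
  assert (Huv : edge u v) by (unfold v; destruct excluded_middle_informative; auto).
  set (f := prepend d F (fun n => Nat.iter n next v)).
  exists (splice w M f), k. split; [|split; [|split]].
  - apply splice_Omega; [exact Hw|reflexivity|].
    apply prepend_edge; [discriminate|exact Hc| |intro n; apply Hnext].
    unfold F. rewrite app_comm_cons, last_last. exact Huv.
  - intros j Hj. unfold splice. destruct (Z.leb_spec j M); [auto|lia].
  - unfold k, F. simpl. lia.
  - unfold splice. destruct (Z.leb_spec k M) as [Hk|Hk]; [unfold k, F in Hk; simpl in Hk; lia|].
    unfold f, prepend. replace (Z.to_nat (k - M)) with (length F) by (unfold k; lia).
    now rewrite Nat.ltb_irrefl, Nat.sub_diag.
Qed.

End Strongly_connected.

Section Universal_path.
Context {V : Type} (edge : V -> V -> Prop) (d : V) (vertices : list V)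
  (Hvertices : forall v, In v vertices) (Hsc : strongly_connected edge).

Fixpoint lists_of_length (n : nat) : list (list V) :=
  match n with
  | O => nil :: nil
  | S n => flat_map (fun v => map (cons v) (lists_of_length n)) vertices
  end.

Lemma In_lists_of_length u : In u (lists_of_length (length u)).
Proof.
  induction u as [|x u IH]; simpl; auto.
  apply in_flat_map. exists x; split; auto. apply in_map; auto.
Qed.

Lemma lists_of_length_length n u : In u (lists_of_length n) -> length u = n.
Proof.
  revert u; induction n as [|n IH]; intros u Hu; simpl in Hu.
  - destruct Hu as [<-|[]]; auto.
  - apply in_flat_map in Hu as [x [_ Hx]]. apply in_map_iff in Hx as [u' [<- Hu']].
    simpl; f_equal; auto.
Qed.

Definition walkb (u : list V) : bool :=
  if excluded_middle_informative (walk edge d u) then true else false.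

(* Finiteness of [V] enters only here: [lists_of_length] enumerates [vertices]. *)
Definition walks_upto (n : nat) : list (list V) :=
  flat_map (fun L => filter walkb (lists_of_length L)) (seq 1 n).

Lemma In_walks_upto u n : walk edge d u -> (1 <= length u <= n)%nat -> In u (walks_upto n).
Proof.
  intros Hu Hlen. apply in_flat_map. exists (length u). split.
  - apply in_seq; lia.
  - apply filter_In. split; [apply In_lists_of_length|]. unfold walkb.
    destruct excluded_middle_informative; tauto.
Qed.

Lemma walks_upto_walk u n : In u (walks_upto n) -> u <> nil /\ walk edge d u.
Proof.
  intro H. apply in_flat_map in H as [L [HL Hu]]. apply in_seq in HL.
  apply filter_In in Hu as [Hu Hb]. apply lists_of_length_length in Hu. split.
  - intros ->; simpl in *; lia.
  - unfold walkb in Hb; destruct excluded_middle_informative; [auto|discriminate].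
Qed.

(* The interior of some walk from [u] to [v]. *)
Definition connector (u v : V) : list V :=
  proj1_sig (constructive_indefinite_description _ (walk_of_clos_trans edge d u v (Hsc u v))).

Lemma connector_walk u v : walk edge d (u :: connector u v ++ v :: nil).
Proof.
  exact (proj2_sig (constructive_indefinite_description _
    (walk_of_clos_trans edge d u v (Hsc u v)))).
Qed.

Definition append_via (P w : list V) : list V := P ++ connector (last P d) (hd d w) ++ w.

Lemma append_via_walk P w : P <> nil -> walk edge d P -> w <> nil -> walk edge d w ->
  walk edge d (append_via P w).
Proof.
  intros HP HwP Hw Hww. unfold append_via.
  destruct (exists_last HP) as [P' [z ->]]. rewrite last_last.
  destruct w as [|y w']; [congruence|]. simpl.
  rewrite <- app_assoc. simpl. apply walk_app; auto.
  rewrite app_comm_cons. apply walk_app; auto. apply connector_walk.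
Qed.

Lemma fold_append_via_prefix ws P : exists r, fold_left append_via ws P = P ++ r.
Proof.
  revert P; induction ws as [|w ws IH]; intro P; simpl.
  - exists nil; now rewrite app_nil_r.
  - destruct (IH (append_via P w)) as [r ->]. unfold append_via.
    exists ((connector (last P d) (hd d w) ++ w) ++ r). now rewrite <- !app_assoc.
Qed.

Lemma fold_append_via_walk ws P : (forall w, In w ws -> w <> nil /\ walk edge d w) ->
  P <> nil -> walk edge d P -> walk edge d (fold_left append_via ws P).
Proof.
  revert P; induction ws as [|w ws IH]; intros P Hws HP HwP; simpl; auto.
  apply IH.
  - intros; apply Hws; simpl; auto.
  - unfold append_via. destruct P; [congruence|discriminate].
  - apply append_via_walk; auto; apply Hws; simpl; auto.
Qed.

Lemma fold_append_via_contains ws P w : In w ws ->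
  exists Q R, fold_left append_via ws P = Q ++ w ++ R /\ (length P <= length Q)%nat.
Proof.
  revert P; induction ws as [|w' ws IH]; intros P Hw; simpl in Hw; [destruct Hw|].
  destruct Hw as [->|Hw].
  - simpl. destruct (fold_append_via_prefix ws (append_via P w)) as [r ->]. unfold append_via.
    exists (P ++ connector (last P d) (hd d w)), r. split.
    + now rewrite <- !app_assoc.
    + rewrite length_app; lia.
  - destruct (IH (append_via P w') Hw) as [Q [R [HQ HL]]]. exists Q, R. split; auto.
    unfold append_via in HL. rewrite length_app in HL. lia.
Qed.

Fixpoint universal_prefix (n : nat) : list V :=
  match n with
  | O => d :: nil
  | S n => fold_left append_via (walks_upto (S n)) (universal_prefix n)
  end.

Lemma universal_prefix_walk n : universal_prefix n <> nil /\ walk edge d (universal_prefix n).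
Proof.
  induction n as [|n [IH1 IH2]]; simpl.
  - split; [discriminate|]. intros i Hi; simpl in Hi; lia.
  - split.
    + destruct (fold_append_via_prefix (walks_upto (S n)) (universal_prefix n)) as [r ->].
      destruct (universal_prefix n); [congruence|discriminate].
    + apply fold_append_via_walk; auto. intros; apply walks_upto_walk with (S n); auto.
Qed.

Lemma universal_prefix_extends n m : (n <= m)%nat ->
  exists r, universal_prefix m = universal_prefix n ++ r.
Proof.
  induction 1 as [|m Hm [r Hr]].
  - exists nil; now rewrite app_nil_r.
  - simpl. destruct (fold_append_via_prefix (walks_upto (S m)) (universal_prefix m)) as [r' ->].
    rewrite Hr. exists (r ++ r'). now rewrite app_assoc.
Qed.

Lemma universal_prefix_length n : (n < length (universal_prefix n))%nat.
Proof.
  induction n as [|n IH]; simpl; [lia|].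
  assert (Hd : In (d :: nil) (walks_upto (S n))).
  { apply In_walks_upto; simpl; [intros i Hi; simpl in Hi; lia|lia]. }
  destruct (fold_append_via_contains _ (universal_prefix n) _ Hd) as [Q [R [-> HL]]].
  rewrite !length_app. simpl. lia.
Qed.

Definition universal_forward (k : nat) : V := nth k (universal_prefix (S k)) d.

Lemma universal_forward_nth n k : (k < length (universal_prefix n))%nat ->
  universal_forward k = nth k (universal_prefix n) d.
Proof.
  intro Hk. unfold universal_forward. destruct (le_lt_dec n (S k)) as [H|H].
  - destruct (universal_prefix_extends _ _ H) as [r ->]. now apply app_nth1.
  - destruct (universal_prefix_extends (S k) n ltac:(lia)) as [r ->]. symmetry. apply app_nth1.
    pose proof (universal_prefix_length (S k)); lia.
Qed.

Lemma universal_forward_edge k : edge (universal_forward k) (universal_forward (S k)).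
Proof.
  pose proof (universal_prefix_length (S (S k))).
  rewrite (universal_forward_nth (S (S k)) k), (universal_forward_nth (S (S k)) (S k)) by lia.
  apply (proj2 (universal_prefix_walk (S (S k)))). lia.
Qed.

Lemma universal_forward_0 : universal_forward 0 = d.
Proof. now rewrite (universal_forward_nth 0 0) by (simpl; lia). Qed.

Lemma universal_forward_contains u M : walk edge d u -> u <> nil ->
  exists m, (M <= m)%nat /\ forall i, (i < length u)%nat -> universal_forward (m + i) = nth i u d.
Proof.
  intros Hu Hne. assert (Hlen : length u <> 0%nat) by (destruct u; [congruence|discriminate]).
  set (n := Nat.max M (length u)).
  assert (HIn : In u (walks_upto (S n))) by (apply In_walks_upto; auto; lia).
  destruct (fold_append_via_contains _ (universal_prefix n) _ HIn) as [Q [R [HQ HL]]].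
  pose proof (universal_prefix_length n).
  exists (length Q). split; [lia|]. intros i Hi.
  rewrite (universal_forward_nth (S n)).
  - simpl. rewrite HQ, app_nth2, app_nth1 by lia. f_equal; lia.
  - simpl. rewrite HQ, !length_app. lia.
Qed.

Definition predecessor (v : V) : V :=
  proj1_sig (constructive_indefinite_description _ (clos_trans_in_edge edge v v (Hsc v v))).

Lemma predecessor_edge v : edge (predecessor v) v.
Proof.
  exact (proj2_sig (constructive_indefinite_description _
    (clos_trans_in_edge edge v v (Hsc v v)))).
Qed.

Definition universal_path (j : Z) : V :=
  if Z.leb 0 j then universal_forward (Z.to_nat j) else Nat.iter (Z.to_nat (- j)) predecessor d.

Lemma universal_path_Omega : Omega edge universal_path.
Proof.
  intro j. unfold universal_path.
  destruct (Z.leb_spec 0 j); destruct (Z.leb_spec 0 (j + 1)).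
  - replace (Z.to_nat (j + 1)) with (S (Z.to_nat j)) by lia. apply universal_forward_edge.
  - lia.
  - assert (j = -1)%Z by lia. subst. simpl. rewrite universal_forward_0. apply predecessor_edge.
  - replace (Z.to_nat (- j)) with (S (Z.to_nat (- (j + 1)))) by lia. apply predecessor_edge.
Qed.

Lemma universal_path_window (w : Z -> V) a K M : Omega edge w ->
  exists D, (M <= D)%Z /\ forall j, (a <= j <= a + Z.of_nat K)%Z -> universal_path (j + D) = w j.
Proof.
  intro Hw.
  destruct (universal_forward_contains (window w a (S K)) (Z.to_nat (M + a)))
    as [m [Hm Hmatch]].
  - apply window_walk; auto.
  - intro E. pose proof (window_length w a (S K)) as Hlen. rewrite E in Hlen. discriminate.
  - exists (Z.of_nat m - a)%Z. split; [lia|]. intros j Hj.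
    unfold universal_path. destruct (Z.leb_spec 0 (j + (Z.of_nat m - a))); [|lia].
    replace (Z.to_nat (j + (Z.of_nat m - a))) with (m + Z.to_nat (j - a))%nat by lia.
    rewrite Hmatch, window_nth by (rewrite ?window_length; lia). f_equal; lia.
Qed.

End Universal_path.

Lemma Un_cv_0_of_pow_half_bound (u : nat -> R) :
  (forall k, 0 <= u k <= 4 * (/2)^k) -> Un_cv u 0.
Proof.
  intros Hu eps Heps. destruct (small_pow_half eps Heps) as [N HN].
  exists N. intros k Hk. pose proof (Hu k). pose proof (pow_half_le N k Hk).
  unfold Rdist. rewrite Rminus_0_r, Rabs_right by lra. lra.
Qed.

Lemma shifted_times_diverge h t (D : nat -> Z) : 0 < h -> (forall k, Z.of_nat k <= D k)%Z ->
  forall M, exists N, forall k, (N <= k)%nat -> t + IZR (D k) * h > M.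
Proof.
  intros Hh HD M. exists (Z.to_nat (up ((M - t) / h))). intros k Hk.
  pose proof (archimed ((M - t) / h)) as [Hup _].
  assert (IZR (up ((M - t) / h)) <= IZR (D k)) by (apply IZR_le; specialize (HD k); lia).
  assert (Hdiv : (M - t) / h * h = M - t) by (field; lra).
  nra.
Qed.

Lemma sensitive_of_branching {V : Type} (edge : V -> V -> Prop) h :
  0 < h -> strongly_connected edge -> has_branching edge -> sensitive edge h.
Proof.
  intros Hh Hsc [u [v1 [v2 [Hv [Hu1 Hu2]]]]].
  exists (1/2). split; [lra|]. intros x Hx B [eps [Heps HB]].
  destruct (Delta_signal edge h Hh x Hx) as [w [t [Hw ->]]].
  destruct (small_pow_half eps Heps) as [N HN].
  set (m0 := Zfloor (t / h)).
  destruct (deviating_path edge Hsc w (m0 + Z.of_nat N + 1) u v1 v2 Hw Hv Hu1 Hu2)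
    as [w' [k [Hw' [Hagree [Hk Hdiff]]]]].
  assert (Hw'Delta : Defs.Delta edge h (signal h w' t)) by (apply signal_Delta; auto).
  exists (signal h w' t), (IZR k * h - t). split; [exact Hw'Delta|]. split; [|split].
  - apply HB; [exact Hw'Delta|]. eapply Rle_lt_trans; [|exact HN].
    apply dist_signal_le_of_agree; auto.
    intros j Hj. symmetry. apply Hagree. fold m0 in Hj. lia.
  - pose proof (Zfloor_div_bound h Hh t) as [_ Ht]. fold m0 in Ht.
    assert (IZR m0 + 1 <= IZR k) by (rewrite <- plus_IZR; apply IZR_le; lia).
    nra.
  - rewrite !psi_signal. replace (t + (IZR k * h - t)) with (0 + IZR k * h) by ring.
    rewrite !signal_shift by auto.
    pose proof (dist_signal_ge1 h Hh (fun j => w (j + k)%Z) (fun j => w' (j + k)%Z)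
      ltac:(simpl; auto)).
    lra.
Qed.

Lemma periodic_dense_of_strongly_connected {V : Type} (edge : V -> V -> Prop) h :
  0 < h -> strongly_connected edge -> periodic_dense edge h.
Proof.
  intros Hh Hsc x Hx eps Heps.
  destruct (Delta_signal edge h Hh x Hx) as [w [t [Hw ->]]].
  destruct (small_pow_half eps Heps) as [N HN].
  set (m0 := Zfloor (t / h)).
  destruct (periodic_path_through edge Hsc w (m0 - Z.of_nat N - 1) (2 * N + 2) Hw)
    as [p [L [HL [Hp [Hper Hagree]]]]].
  exists (signal h p t). split; [apply signal_Delta; auto|]. split.
  - exists (IZR L * h). split; [apply Rmult_lt_0_compat; [apply IZR_lt|]; auto|].
    rewrite psi_signal, signal_shift by auto. f_equal.
    apply functional_extensionality; intro j; apply Hper.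
  - eapply Rle_lt_trans; [|exact HN]. apply dist_signal_le_of_agree; auto.
    intros j Hj. symmetry. apply Hagree. fold m0 in Hj. lia.
Qed.

Lemma top_transitive_of_finite {V : Type} (edge : V -> V -> Prop) h (d : V) :
  0 < h -> finite_type V -> strongly_connected edge -> top_transitive edge h.
Proof.
  intros Hh [vertices Hvertices] Hsc.
  set (U := universal_path edge d vertices Hsc).
  exists (signal h U 0). split; [apply signal_Delta, universal_path_Omega; auto|].
  intro y. split; [intros [Hy _]; exact Hy|intro Hy]. split; [exact Hy|].
  destruct (Delta_signal edge h Hh y Hy) as [w [t [Hw ->]]].
  set (m0 := Zfloor (t / h)).
  assert (Hvisit : forall k : nat, exists D, (Z.of_nat k <= D)%Z /\
    forall j, (Z.abs (j - m0) <= Z.of_nat k + 1)%Z -> U (j + D)%Z = w j).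
  { intro k.
    destruct (universal_path_window edge d vertices Hvertices Hsc w
      (m0 - Z.of_nat k - 1) (2 * k + 2) (Z.of_nat k) Hw) as [D [HD Hmatch]].
    exists D. split; auto. intros j Hj. apply Hmatch. lia. }
  destruct (choice _ Hvisit) as [D HD].
  exists (fun k => t + IZR (D k) * h). split.
  - apply shifted_times_diverge; auto. intro k; apply HD.
  - apply Un_cv_0_of_pow_half_bound. intro k. split; [apply dist_nonneg; auto|].
    rewrite psi_signal, Rplus_0_l, signal_shift by auto.
    apply dist_signal_le_of_agree; auto. apply HD.
Qed.

Theorem mainTheorem12 (V : Type) (edge : V -> V -> Prop) (h : R) :
  0 < h -> finite_type V -> strongly_connected edge -> has_branching edge ->
  chaotic edge h.
Proof.
  intros Hh Hfin Hsc Hbranch. split; [|split].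
  - exact (sensitive_of_branching edge h Hh Hsc Hbranch).
  - exact (periodic_dense_of_strongly_connected edge h Hh Hsc).
  - destruct Hbranch as [u _]. exact (top_transitive_of_finite edge h u Hh Hfin Hsc).
Qed.
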